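(* Let $A\in\mathbb{R}^{n\times n}$ be nonsymmetric and $A_0\in\mathbb{R}^{n\times n}$ symmetric positive definite, and suppose there are constants $c_0,c_1>0$ with $$\mathbf v^TA\mathbf v\ge c_0\,\mathbf v^TA_0\mathbf v\ \ \forall\mathbf v,\qquad \mathbf w^TA\mathbf v\le c_1\sqrt{\mathbf v^TA_0\mathbf v}\sqrt{\mathbf w^TA_0\mathbf w}\ \ \forall \mathbf v,\mathbf w\in\mathbb{R}^n.$$ Let $I_1,\dots,I_{N_s}$ be extension matrices and $P$ a coarse interpolation matrix as described in the context, and define the additive Schwarz preconditioners $B$ and $B_0$ by $$B^{-1}=P A_c^{-1}P^T+\sum_{k=1}^{N_s} I_kA_k^{-1}I_k^T,\qquad B_0^{-1}=P (A^{(0)}_c)^{-1}P^T+\sum_{k=1}^{N_s} I_k(A^{(0)}_k)^{-1}I_k^T,$$ where $A_k=I_k^TAI_k$, $A^{(0)}_k=I_k^TA_0I_k$, $A_c=P^TAP$, $A^{(0)}_c=P^TA_0P$. Assume there exist $\gamma_0,\gamma_1>0$ such that $$\gamma_0\,\mathbf v^TB_0\mathbf v\le \mathbf v^TA_0\mathbf v\le\gamma_1\,\mathbf v^TB_0\mathbf v\quad\text{for all }\mathbf v\in\mathbb{R}^n.$$ Then, with $$\beta_0=\frac{c_0^3}{c_1^2\gamma_1},\qquad \beta_1=\frac{c_1^2}{c_0\gamma_0},$$ we have $$\mathbf v^TB\mathbf v\ge\beta_0\,\mathbf v^TA_0\mathbf v\quad\text{for all }\mathbf v,\qquad \mathbf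 w^TB\mathbf v\le\beta_1\sqrt{\mathbf v^TA_0\mathbf v}\sqrt{\mathbf w^TA_0\mathbf w}\quad\text{for all }\mathbf v,\mathbf w,$$ and the same two estimates hold with $B$ replaced by $B^T$.
   Context: For $k=1,\dots,N_s$, $I_k\in\mathbb{R}^{n\times n_k}$ is a matrix whose columns are distinct standard basis vectors of $\mathbb{R}^n$ (so $I_k\mathbf v_k$ extends a local vector $\mathbf v_k$ by zero outside an index set, and $A_k$, $A_k^{(0)}$ are principal submatrices of $A$, $A_0$). $P\in\mathbb{R}^{n\times n_c}$ is a coarse-to-fine interpolation matrix with full column rank, so that $A_c$ and $A^{(0)}_c$ (and all local matrices) are invertible. *)

From HB Require Import structures.
From mathcomp Require Import all_boot all_order all_algebra.
Set Implicit Arguments. Unset Strict Implicit. Unset Printing Implicit Defensive.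
Import Order.TTheory GRing.Theory Num.Theory.
Local Open Scope ring_scope.

Definition bform (R : ringType) (n : nat) (M : 'M[R]_n) (w v : 'cV[R]_n) : R :=
  (w^T *m M *m v) 0 0.

(* extension matrix I_k : 'M_(n, m) whose j-th column is the standard basis
   vector e_(f j); distinct columns iff f injective *)
Definition ext_mx (R : ringType) (n m : nat) (f : 'I_m -> 'I_n) : 'M[R]_(n, m) :=
  \matrix_(i < n, j < m) (i == f j)%:R.

Definition asm_inv (R : fieldType) (n nc Ns : nat) (nk : 'I_Ns -> nat)
    (f : forall k : 'I_Ns, 'I_(nk k) -> 'I_n) (P : 'M[R]_(n, nc)) (M : 'M[R]_n)
    : 'M[R]_n :=
  P *m invmx (P^T *m M *m P) *m P^T
  + \sum_(k < Ns) ext_mx R (f k) *m invmx ((ext_mx R (f k))^T *m M *m ext_mx R (f k))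
                  *m (ext_mx R (f k))^T.

Definition asm (R : fieldType) (n nc Ns : nat) (nk : 'I_Ns -> nat)
    (f : forall k : 'I_Ns, 'I_(nk k) -> 'I_n) (P : 'M[R]_(n, nc)) (M : 'M[R]_n)
    : 'M[R]_n := invmx (asm_inv f P M).

From HB Require Import structures.
From mathcomp Require Import all_boot all_order all_algebra.
From mathcomp Require Import ring lra.
Set Implicit Arguments. Unset Strict Implicit. Unset Printing Implicit Defensive.
Import Order.TTheory GRing.Theory Num.Theory.
Local Open Scope ring_scope.

(* Relative to a symmetric positive definite G, call M c-coercive if
   c v'Gv <= v'Mv and s-bounded if 2 w'Mv <= s (v'Gv + w'Gw).  Both properties
   pass to Galerkin restrictions Q'MQ, to extensions Q N Q' and to sums, and
   inverting M turns them into (c/s^2)-coercivity and (1/c)-boundedness of M^-1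
   relative to G^-1.  Applied to every subspace solve of B^-1 relative to
   B0^-1, and then to B = (B^-1)^-1, this gives the constants c0^3/c1^2 and
   c1^2/c0 relative to B0; the spectral equivalence of B0 and A0 turns them into
   beta0 and beta1, and transposition preserves both properties. *)

Section BilinearForm.
Variables (R : comNzRingType) (n : nat).
Implicit Types (M : 'M[R]_n) (v w : 'cV[R]_n).

Lemma trmx11 (X : 'M[R]_1) : X^T 0 0 = X 0 0.
Proof. by rewrite mxE. Qed.

Lemma bformZl M a w v : bform M (a *: w) v = a * bform M w v.
Proof. by rewrite /bform linearZ /= -!scalemxAl mxE. Qed.

Lemma bformZr M a w v : bform M w (a *: v) = a * bform M w v.
Proof. by rewrite /bform -scalemxAr mxE. Qed.

Lemma bformDl M w1 w2 v : bform M (w1 + w2) v = bform M w1 v + bform M w2 v.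
Proof. by rewrite /bform linearD /= !mulmxDl mxE. Qed.

Lemma bformDr M w v1 v2 : bform M w (v1 + v2) = bform M w v1 + bform M w v2.
Proof. by rewrite /bform mulmxDr mxE. Qed.

Lemma bformNl M w v : bform M (- w) v = - bform M w v.
Proof. by rewrite -scaleN1r bformZl mulN1r. Qed.

Lemma bformNr M w v : bform M w (- v) = - bform M w v.
Proof. by rewrite -scaleN1r bformZr mulN1r. Qed.

Lemma bform0l M v : bform M 0 v = 0.
Proof. by rewrite /bform trmx0 !mul0mx mxE. Qed.

Lemma bform0r M w : bform M w 0 = 0.
Proof. by rewrite /bform mulmx0 mxE. Qed.

Lemma bform0 w v : bform 0 w v = 0.
Proof. by rewrite /bform mulmx0 mul0mx mxE. Qed.

Lemma bformD M1 M2 w v : bform (M1 + M2) w v = bform M1 w v + bform M2 w v.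
Proof. by rewrite /bform mulmxDr mulmxDl mxE. Qed.

Lemma bform_tr M w v : bform M^T v w = bform M w v.
Proof. by rewrite /bform -trmx11 !trmx_mul !trmxK mulmxA. Qed.

Lemma dotmxC v w : (v^T *m w) 0 0 = (w^T *m v) 0 0.
Proof. by rewrite -trmx11 trmx_mul trmxK. Qed.

End BilinearForm.

Lemma bform_invmx (R : comUnitRingType) n (M : 'M[R]_n) (w v : 'cV[R]_n) :
  M \in unitmx -> bform M w (invmx M *m v) = (w^T *m v) 0 0.
Proof. by move=> uM; rewrite /bform -mulmxA mulKVmx. Qed.

Lemma bform_invmx_sym (R : comUnitRingType) n (M : 'M[R]_n) (w v : 'cV[R]_n) :
  M^T = M -> M \in unitmx ->
  bform M (invmx M *m w) (invmx M *m v) = bform (invmx M) w v.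
Proof. by move=> sM uM; rewrite bform_invmx // trmx_mul trmx_inv sM. Qed.

Lemma bform_restrict (R : comNzRingType) n m (Q : 'M[R]_(n, m)) (M : 'M[R]_n) w v :
  bform (Q^T *m M *m Q) w v = bform M (Q *m w) (Q *m v).
Proof. by rewrite /bform trmx_mul !mulmxA. Qed.

Lemma bform_extend (R : comNzRingType) n m (Q : 'M[R]_(n, m)) (N : 'M[R]_m) w v :
  bform (Q *m N *m Q^T) w v = bform N (Q^T *m w) (Q^T *m v).
Proof. by rewrite /bform trmx_mul trmxK !mulmxA. Qed.

Definition posdef (R : numDomainType) n (M : 'M[R]_n) :=
  forall v, v != 0 -> 0 < bform M v v.

Definition coercive (R : numDomainType) n (M G : 'M[R]_n) (c : R) :=
  forall v, c * bform G v v <= bform M v v.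

(* The AM-GM form of [w'Mv <= s |v|_G |w|_G]; unlike the latter it is
   additive in the pair (M, G). *)
Definition bounded (R : numDomainType) n (M G : 'M[R]_n) (s : R) :=
  forall v w, 2 * bform M w v <= s * (bform G v v + bform G w w).

Section RelativeBounds.
Variables (R : realFieldType) (n : nat).
Implicit Types (M G H : 'M[R]_n) (v w : 'cV[R]_n).

Lemma posdef_ge0 G v : posdef G -> 0 <= bform G v v.
Proof.
move=> pG; have [->|nz] := eqVneq v 0; first by rewrite bform0l.
exact/ltW/pG.
Qed.

Lemma bform_young G t v w : G^T = G -> posdef G ->
  2 * t * bform G v w <= t ^+ 2 * bform G v v + bform G w w.
Proof.
move=> sG pG; have := posdef_ge0 (t *: v - w) pG.
rewrite !(bformDl, bformDr, bformNl, bformNr, bformZl, bformZr).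
rewrite -[bform G w v]bform_tr sG; nra.
Qed.

Lemma posdef_unitmx G : posdef G -> G \in unitmx.
Proof.
move=> pG; rewrite -row_free_unit -kermx_eq0; apply/rowV0P => u /sub_kermxP uG0.
apply/eqP/negP => /negP nz_u.
have := pG u^T; rewrite trmx_eq0 => /(_ nz_u).
by rewrite /bform trmxK uG0 mul0mx mxE ltxx.
Qed.

Lemma posdef_invmx G : G^T = G -> posdef G -> posdef (invmx G).
Proof.
move=> sG pG v nz_v; have uG := posdef_unitmx pG.
rewrite -bform_invmx_sym //; apply: pG.
by apply: contra nz_v => /eqP/(congr1 (mulmx G)); rewrite mulKVmx // mulmx0 => ->.
Qed.

Lemma coercive_posdef M G c : posdef G -> 0 < c -> coercive M G c -> posdef M.
Proof. by move=> pG c_gt0 cM v nz_v; apply: lt_le_trans (cM v); rewrite mulr_gt0 ?pG. Qed.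

Lemma coercive_trmx M G c : coercive M G c -> coercive M^T G c.
Proof. by move=> cM v; rewrite bform_tr. Qed.

Lemma bounded_trmx M G s : bounded M G s -> bounded M^T G s.
Proof. by move=> bM v w; rewrite bform_tr addrC; apply: bM. Qed.

Lemma coercive_trans M G H c d :
  0 <= c -> coercive M G c -> coercive G H d -> coercive M H (c * d).
Proof. by move=> c_ge0 cM cG v; rewrite -mulrA (le_trans _ (cM v)) ?ler_wpM2l. Qed.

Lemma bounded_trans M G H s d :
  0 <= s -> 0 < d -> bounded M G s -> coercive H G d -> bounded M H (s / d).
Proof.
move=> s_ge0 d_gt0 bM cH v w; apply: le_trans (bM v w) _.
rewrite -mulrA ler_wpM2l // ler_pdivlMl // mulrDr lerD ?cH //.
Qed.

Lemma coercive_add M1 M2 G1 G2 c :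
  coercive M1 G1 c -> coercive M2 G2 c -> coercive (M1 + M2) (G1 + G2) c.
Proof. by move=> c1 c2 v; rewrite !bformD mulrDr lerD. Qed.

Lemma bounded_add M1 M2 G1 G2 s :
  bounded M1 G1 s -> bounded M2 G2 s -> bounded (M1 + M2) (G1 + G2) s.
Proof. by move=> b1 b2 v w; rewrite !bformD; have := b1 v w; have := b2 v w; lra. Qed.

Lemma coercive_sum I (r : seq I) (F G : I -> 'M[R]_n) c :
  (forall i, coercive (F i) (G i) c) ->
  coercive (\sum_(i <- r) F i) (\sum_(i <- r) G i) c.
Proof.
move=> cF; apply: (big_ind2 (fun M G => coercive M G c)) => [v||i _].
- by rewrite !bform0 mulr0.
- by move=> M1 G1 M2 G2; apply: coercive_add.
- exact: cF.
Qed.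

Lemma bounded_sum I (r : seq I) (F G : I -> 'M[R]_n) s :
  (forall i, bounded (F i) (G i) s) ->
  bounded (\sum_(i <- r) F i) (\sum_(i <- r) G i) s.
Proof.
move=> bF; apply: (big_ind2 (fun M G => bounded M G s)) => [v w||i _].
- by rewrite !bform0 addr0 !mulr0.
- by move=> M1 G1 M2 G2; apply: bounded_add.
- exact: bF.
Qed.

End RelativeBounds.

Lemma trmx_restrict (R : comNzRingType) n m (Q : 'M[R]_(n, m)) (G : 'M[R]_n) :
  (Q^T *m G *m Q)^T = Q^T *m G^T *m Q.
Proof. by rewrite !trmx_mul trmxK mulmxA. Qed.

Lemma trmx_extend (R : comNzRingType) n m (Q : 'M[R]_(n, m)) (N : 'M[R]_m) :
  (Q *m N *m Q^T)^T = Q *m N^T *m Q^T.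
Proof. by rewrite !trmx_mul trmxK mulmxA. Qed.

Section Subspace.
Variables (R : realFieldType) (n m : nat) (Q : 'M[R]_(n, m)).

Lemma posdef_restrict G : row_free Q^T -> posdef G -> posdef (Q^T *m G *m Q).
Proof.
move=> fQ pG x nz_x; rewrite bform_restrict; apply: pG.
by rewrite -trmx_eq0 trmx_mul mulmx_free_eq0 // trmx_eq0.
Qed.

Lemma coercive_restrict M G c :
  coercive M G c -> coercive (Q^T *m M *m Q) (Q^T *m G *m Q) c.
Proof. by move=> cM x; rewrite !bform_restrict. Qed.

Lemma bounded_restrict M G s :
  bounded M G s -> bounded (Q^T *m M *m Q) (Q^T *m G *m Q) s.
Proof. by move=> bM x y; rewrite !bform_restrict. Qed.

Lemma coercive_extend N H c :
  coercive N H c -> coercive (Q *m N *m Q^T) (Q *m H *m Q^T) c.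
Proof. by move=> cN v; rewrite !bform_extend. Qed.

Lemma bounded_extend N H s :
  bounded N H s -> bounded (Q *m N *m Q^T) (Q *m H *m Q^T) s.
Proof. by move=> bN v w; rewrite !bform_extend. Qed.

End Subspace.

Section Inverse.
Variables (R : realFieldType) (n : nat) (M G : 'M[R]_n) (c s : R).
Hypotheses (sG : G^T = G) (pG : posdef G) (c_gt0 : 0 < c) (s_gt0 : 0 < s).
Hypotheses (cM : coercive M G c) (bM : bounded M G s).

Let uG : G \in unitmx := posdef_unitmx pG.
Let uM : M \in unitmx := posdef_unitmx (coercive_posdef pG c_gt0 cM).

Lemma coercive_invmx : coercive (invmx M) (invmx G) (c / s ^+ 2).
Proof.
move=> u; rewrite -(@bform_invmx_sym _ _ G) //.
set x := invmx M *m u; set y := invmx G *m u.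
have -> : bform (invmx M) u u = bform M x x.
  by rewrite bform_invmx // /bform -mulmxA dotmxC.
have eMG : bform M y x = bform G y y by rewrite !bform_invmx.
have norm_y : bform G y y <= s ^+ 2 * bform G x x.
  have := bM (s *: x) y; rewrite bformZr bformZl bformZr eMG => h.
  by rewrite -(ler_pM2l s_gt0) expr2; nra.
apply: le_trans (cM x).
apply: (@le_trans _ _ (c / s ^+ 2 * (s ^+ 2 * bform G x x))).
  by apply: ler_wpM2l norm_y; rewrite divr_ge0 ?exprn_ge0 ?ltW.
by rewrite mulrA divfK ?expf_neq0 ?gt_eqF.
Qed.

Lemma bounded_invmx : bounded (invmx M) (invmx G) c^-1.
Proof.
move=> u w; rewrite -!(@bform_invmx_sym _ _ G) //.
set x := invmx M *m u.
have -> : bform (invmx M) w u = bform G x (invmx G *m w).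
  by rewrite bform_invmx // /bform -mulmxA dotmxC.
have eMG : bform M x x = bform G x (invmx G *m u) by rewrite !bform_invmx.
have norm_x : c ^+ 2 * bform G x x <= bform G (invmx G *m u) (invmx G *m u).
  have := bform_young c x (invmx G *m u) sG pG.
  have := ler_wpM2l (ltW c_gt0) (cM x); rewrite eMG; lra.
have := bform_young c x (invmx G *m w) sG pG.
rewrite ler_pdivlMl //; lra.
Qed.

End Inverse.

Lemma bounded_sqrt (R : rcfType) n (M G : 'M[R]_n) s :
  posdef G -> 0 <= s -> bounded M G s ->
  forall v w, bform M w v <= s * Num.sqrt (bform G v v) * Num.sqrt (bform G w w).
Proof.
move=> pG s_ge0 bM v w.
have [->|nz_v] := eqVneq v 0; first by rewrite bform0r bform0l sqrtr0 mulr0 mul0r.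
have [->|nz_w] := eqVneq w 0; first by rewrite bform0l bform0l sqrtr0 mulr0.
set a := Num.sqrt (bform G v v); set b := Num.sqrt (bform G w w).
have a_gt0 : 0 < a by rewrite sqrtr_gt0 pG.
have b_gt0 : 0 < b by rewrite sqrtr_gt0 pG.
have eGv : bform G v v = a ^+ 2 by rewrite sqr_sqrtr // posdef_ge0.
have eGw : bform G w w = b ^+ 2 by rewrite sqr_sqrtr // posdef_ge0.
have := bM (b *: v) (a *: w); rewrite !(bformZl, bformZr) eGv eGw => h.
by rewrite -(ler_pM2l (mulr_gt0 a_gt0 b_gt0)); lra.
Qed.

Lemma bounded_of_sqrt (R : rcfType) n (M G : 'M[R]_n) s :
  posdef G -> 0 <= s ->
  (forall v w, bform M w v <= s * Num.sqrt (bform G v v) * Num.sqrt (bform G w w)) ->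
  bounded M G s.
Proof.
move=> pG s_ge0 bM v w; have := bM v w.
set a := Num.sqrt (bform G v v); set b := Num.sqrt (bform G w w).
have amgm : 2 * (a * b) <= bform G v v + bform G w w.
  have := sqr_ge0 (a - b); rewrite sqrrB !sqr_sqrtr ?posdef_ge0 //; lra.
have := ler_wpM2l s_ge0 amgm; lra.
Qed.

Definition subspace_inv (R : comUnitRingType) n m (Q : 'M[R]_(n, m)) (M : 'M[R]_n)
  : 'M[R]_n := Q *m invmx (Q^T *m M *m Q) *m Q^T.

Lemma trmx_subspace_inv (R : comUnitRingType) n m (Q : 'M[R]_(n, m)) (M : 'M[R]_n) :
  (subspace_inv Q M)^T = subspace_inv Q M^T.
Proof. by rewrite /subspace_inv trmx_extend trmx_inv trmx_restrict. Qed.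

Section SubspaceInverse.
Variables (R : realFieldType) (n m : nat) (Q : 'M[R]_(n, m)) (A G : 'M[R]_n) (c s : R).
Hypotheses (fQ : row_free Q^T) (sG : G^T = G) (pG : posdef G).
Hypotheses (c_gt0 : 0 < c) (s_gt0 : 0 < s) (cA : coercive A G c) (bA : bounded A G s).

Let sQG : (Q^T *m G *m Q)^T = Q^T *m G *m Q.
Proof. by rewrite trmx_restrict sG. Qed.

Let pQG : posdef (Q^T *m G *m Q) := posdef_restrict fQ pG.

Lemma coercive_subspace_inv :
  coercive (subspace_inv Q A) (subspace_inv Q G) (c / s ^+ 2).
Proof.
apply/coercive_extend/coercive_invmx => //.
  exact: coercive_restrict.
exact: bounded_restrict.
Qed.

Lemma bounded_subspace_inv : bounded (subspace_inv Q A) (subspace_inv Q G) c^-1.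
Proof. by apply/bounded_extend/bounded_invmx => //; apply: coercive_restrict. Qed.

End SubspaceInverse.

Lemma row_free_trmx_ext_mx (R : fieldType) n m (f : 'I_m -> 'I_n) :
  injective f -> row_free (ext_mx R f)^T.
Proof.
move=> f_inj; apply/row_freeP; exists (ext_mx R f); apply/matrixP => j k.
rewrite !mxE (bigD1 (f j)) //= big1 => [|i /negbTE fj_i]; last by rewrite !mxE fj_i mul0r.
by rewrite !mxE eqxx mul1r addr0 (inj_eq f_inj).
Qed.

Section AdditiveSchwarz.
Variables (R : realFieldType) (n nc Ns : nat) (nk : 'I_Ns -> nat).
Variables (f : forall k : 'I_Ns, 'I_(nk k) -> 'I_n) (P : 'M[R]_(n, nc)).
Arguments f : clear implicits.

Lemma asm_invE (M : 'M[R]_n) :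
  asm_inv f P M = subspace_inv P M + \sum_(k < Ns) subspace_inv (ext_mx R (f k)) M.
Proof. by []. Qed.

Lemma trmx_asm_inv (M : 'M[R]_n) : (asm_inv f P M)^T = asm_inv f P M^T.
Proof.
rewrite !asm_invE linearD linear_sum /= trmx_subspace_inv.
by under eq_bigr do rewrite trmx_subspace_inv.
Qed.

Variables (A A0 : 'M[R]_n) (c0 c1 : R).
Hypotheses (f_inj : forall k, injective (f k)) (P_free : row_free P^T).
Hypotheses (sA0 : A0^T = A0) (pA0 : posdef A0) (c0_gt0 : 0 < c0) (c1_gt0 : 0 < c1).
Hypotheses (cA : coercive A A0 c0) (bA : bounded A A0 c1).

Lemma coercive_asm_inv : coercive (asm_inv f P A) (asm_inv f P A0) (c0 / c1 ^+ 2).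
Proof.
rewrite !asm_invE; apply: coercive_add; first exact: coercive_subspace_inv.
by apply: coercive_sum => k; apply: coercive_subspace_inv; rewrite ?row_free_trmx_ext_mx.
Qed.

Lemma bounded_asm_inv : bounded (asm_inv f P A) (asm_inv f P A0) c0^-1.
Proof.
rewrite !asm_invE; apply: bounded_add; first exact: bounded_subspace_inv.
by apply: bounded_sum => k; apply: bounded_subspace_inv; rewrite ?row_free_trmx_ext_mx.
Qed.

Hypothesis pB0 : posdef (asm f P A0).

Let sS0 : (asm_inv f P A0)^T = asm_inv f P A0.
Proof. by rewrite trmx_asm_inv sA0. Qed.

Let pS0 : posdef (asm_inv f P A0).
Proof. by rewrite -[asm_inv _ _ _]invmxK; apply: posdef_invmx; rewrite // trmx_inv sS0. Qed.

Lemma coercive_asm : coercive (asm f P A) (asm f P A0) (c0 ^+ 3 / c1 ^+ 2).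
Proof.
have -> : c0 ^+ 3 / c1 ^+ 2 = c0 / c1 ^+ 2 / c0^-1 ^+ 2 by field; rewrite !gt_eqF.
apply: coercive_invmx coercive_asm_inv bounded_asm_inv => //.
  by rewrite divr_gt0 ?exprn_gt0.
by rewrite invr_gt0.
Qed.

Lemma bounded_asm : bounded (asm f P A) (asm f P A0) (c1 ^+ 2 / c0).
Proof.
have -> : c1 ^+ 2 / c0 = (c0 / c1 ^+ 2)^-1 by rewrite invf_div.
by apply: bounded_invmx coercive_asm_inv => //; rewrite divr_gt0 ?exprn_gt0.
Qed.

End AdditiveSchwarz.

Theorem lemma3p2 (R : rcfType) (n nc Ns : nat) (nk : 'I_Ns -> nat)
    (f : forall k : 'I_Ns, 'I_(nk k) -> 'I_n) (P : 'M[R]_(n, nc))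
    (A A0 : 'M[R]_n) (c0 c1 gamma0 gamma1 : R) :
  (forall k, injective (f k)) ->
  \rank P = nc ->
  A0^T = A0 ->
  (forall v : 'cV[R]_n, v != 0 -> 0 < bform A0 v v) ->
  0 < c0 -> 0 < c1 ->
  (forall v : 'cV[R]_n, bform A v v >= c0 * bform A0 v v) ->
  (forall v w : 'cV[R]_n,
      bform A w v <= c1 * Num.sqrt (bform A0 v v) * Num.sqrt (bform A0 w w)) ->
  0 < gamma0 -> 0 < gamma1 ->
  (forall v : 'cV[R]_n,
      gamma0 * bform (asm f P A0) v v <= bform A0 v v /\
      bform A0 v v <= gamma1 * bform (asm f P A0) v v) ->
  let beta0 := c0 ^+ 3 / (c1 ^+ 2 * gamma1) in
  let beta1 := c1 ^+ 2 / (c0 * gamma0) in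
  let B := asm f P A in
  (forall v : 'cV[R]_n, bform B v v >= beta0 * bform A0 v v) /\
  (forall v w : 'cV[R]_n,
      bform B w v <= beta1 * Num.sqrt (bform A0 v v) * Num.sqrt (bform A0 w w)) /\
  (forall v : 'cV[R]_n, bform B^T v v >= beta0 * bform A0 v v) /\
  (forall v w : 'cV[R]_n,
      bform B^T w v <= beta1 * Num.sqrt (bform A0 v v) * Num.sqrt (bform A0 w w)).
Proof.
move=> f_inj rP sA0 pA0 c0_gt0 c1_gt0 cA hA g0_gt0 g1_gt0 hB0 beta0 beta1 B.
have P_free : row_free P^T by rewrite /row_free mxrank_tr rP.
have bA : bounded A A0 c1 by apply: bounded_of_sqrt; rewrite ?ltW.
have cA0 : coercive A0 (asm f P A0) gamma0 by move=> v; case: (hB0 v).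
have cB0 : coercive (asm f P A0) A0 gamma1^-1.
  by move=> v; rewrite ler_pdivrMl //; case: (hB0 v).
have pB0 : posdef (asm f P A0) by apply: coercive_posdef pA0 _ cB0; rewrite invr_gt0.
have cB : coercive B A0 beta0.
  rewrite /beta0 invfM mulrA; apply: coercive_trans cB0.
    by rewrite ltW // divr_gt0 ?exprn_gt0.
  exact: coercive_asm.
have bB : bounded B A0 beta1.
  rewrite /beta1 invfM mulrA; apply: bounded_trans cA0 => //.
    by rewrite ltW // divr_gt0 ?exprn_gt0.
  exact: bounded_asm.
have beta1_ge0 : 0 <= beta1 by rewrite ltW // divr_gt0 ?mulr_gt0 ?exprn_gt0.
split=> //; split; first exact: bounded_sqrt.
split; first exact: coercive_trmx.
exact/bounded_sqrt/bounded_trmx.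
Qed.
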